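(* Let $q$ be a prime power, $n\ge1$, and let $M$ be chosen uniformly at random from $\mathrm{GL}(n,\mathbb{F}_q)$. Then for every integer $0\le h<n-1$ and every monic $f\in\mathbb{F}_q[T]$ of degree $n$, $$\left|\mathbb{P}_{M\in\mathrm{GL}(n,\mathbb{F}_q)}\big(\det(T-M)\in I(f;h)\big)-\frac{q^{h+1}}{q^n}\right|\le\frac{n-h}{q^n}.$$
   Context: For a monic polynomial $f\in\mathbb{F}_q[T]$ of degree $n$ and $0\le h\le n-1$, $I(f;h)=\{g\in\mathbb{F}_q[T] \text{ monic}: \deg(f-g)\le h\}$ (with $\deg 0=-\infty$). $\det(T-M)$ is the characteristic polynomial of $M$. *)

From HB Require Import structures.
From mathcomp Require Import all_boot all_order all_algebra.
Set Implicit Arguments. Unset Strict Implicit. Unset Printing Implicit Defensive.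
Import Order.TTheory GRing.Theory Num.Theory.
Local Open Scope ring_scope.

(* I(f;h) = { g monic : deg (f - g) <= h }, deg 0 = -oo.
   Since size p = deg p + 1 (and size 0 = 0), deg (f-g) <= h  <->  size (f-g) <= h+1. *)
Definition Iset (F : fieldType) (f : {poly F}) (h : nat) : pred {poly F} :=
  fun g => (g \is monic) && (size (f - g)%R <= h.+1)%N.

Definition prob_charpoly_in_I (F : finFieldType) (n : nat) (f : {poly F}) (h : nat) : rat :=
  (#|[set M : 'M[F]_n | (M \in unitmx) && Iset f h (char_poly M)]|%:R
   / #|[set M : 'M[F]_n | M \in unitmx]|%:R).

From mathcomp Require Import all_boot all_order all_algebra.
From mathcomp Require Import zify ring lra.
Set Implicit Arguments. Unset Strict Implicit. Unset Printing Implicit Defensive.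
Import Order.TTheory GRing.Theory Num.Theory.
Local Open Scope ring_scope.

(* Count the pairs (M, v) with M invertible, v <> 0 and det(T - M) in I(f;h):
   there are N (q^n - 1) of them, N being the number of admissible M.  Sort them
   by the dimension d of the Krylov space of v under M.  Completing the Krylov
   basis v, vM, ..., vM^(d-1) to a basis of F^n puts M in block lower triangular
   form, with a companion block C_g on top and an invertible block B of size
   m = n - d, so that det(T - M) = g det(T - B); each pair (g, B) arises from
   exactly #GL_n / #GL_m pairs (M, v).  For fixed B, g det(T - B) lies in I(f;h)
   iff deg((f div det(T - B)) - g) <= h - m when m <= h, which leaves
   (q - 1) q^(h - m) monic g of degree d with g(0) <> 0; when m > h at most one
   g qualifies.  Summing the geometric series over d gives
     N (q^n - 1) = #GL_n (q^(h+1) - 1) + E  with  0 <= E <= (n - h - 1) #GL_n,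
   and the bound follows by dividing by #GL_n q^n. *)

Section Krylov.
Variables (F : fieldType) (n : nat) (M : 'M[F]_n) (v : 'rV[F]_n).

Definition krylov_mx k : 'M[F]_(k, n) := \matrix_(i < k) (v *m M ^+ i).

Definition krylov_dim d :=
  row_free (krylov_mx d) && (v *m M ^+ d <= krylov_mx d)%MS.

Lemma row_krylov_mx k (i : 'I_k) : row i (krylov_mx k) = v *m M ^+ i.
Proof. by rewrite rowK. Qed.

Lemma iterate_sub_krylov_mx k i : (i < k)%N -> (v *m M ^+ i <= krylov_mx k)%MS.
Proof. by move=> lt_ik; rewrite -(row_krylov_mx (Ordinal lt_ik)) row_sub. Qed.

Lemma krylov_mxS k : (krylov_mx k.+1 :=: krylov_mx k + v *m M ^+ k)%MS.
Proof.
apply/eqmxP/andP; split.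
  apply/row_subP => i; rewrite row_krylov_mx; have [lt_ik|le_ki] := ltnP i k.
    by apply: submx_trans (addsmxSl _ _); exact: iterate_sub_krylov_mx.
  have -> : i = k :> nat by apply/eqP; rewrite eqn_leq le_ki -ltnS ltn_ord.
  exact: addsmxSr.
rewrite addsmx_sub iterate_sub_krylov_mx // andbT; apply/row_subP => i.
by rewrite row_krylov_mx iterate_sub_krylov_mx // leqW.
Qed.

Lemma krylov_dim_stable d : krylov_dim d -> stablemx (krylov_mx d) M.
Proof.
case/andP=> _ sub_d; apply/row_subP => i.
rewrite row_mul row_krylov_mx -mulmxA mulmxE -exprSr.
have [lt_id|le_di] := ltnP i.+1 d; first exact: iterate_sub_krylov_mx.
by have -> : i.+1 = d by apply/eqP; rewrite eqn_leq le_di ltn_ord.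
Qed.

Lemma krylov_dim_iterate_sub d j : krylov_dim d -> (v *m M ^+ j <= krylov_mx d)%MS.
Proof.
move=> dimd; elim: j => [|j IHj].
  case: d dimd => [/andP[] //|d _]; exact: iterate_sub_krylov_mx.
rewrite exprSr -mulmxE mulmxA; apply: submx_trans (krylov_dim_stable dimd).
exact: submxMr.
Qed.

Lemma krylov_dim_uniq d d' : krylov_dim d -> krylov_dim d' -> d = d'.
Proof.
wlog le_dd' : d d' / (d <= d')%N.
  by move=> W; case: (leqP d d') => [|/ltnW] le hd hd'; [|apply/esym]; apply: W.
move=> hd hd'; apply/eqP; rewrite eqn_leq le_dd' /=.
have /mxrankS : (krylov_mx d' <= krylov_mx d)%MS.
  by apply/row_subP => i; rewrite row_krylov_mx krylov_dim_iterate_sub.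
by case/andP: hd => /eqP-> _; case/andP: hd' => /eqP->.
Qed.

Lemma mxrank_adds_nsub m (A : 'M[F]_(m, n)) (u : 'rV[F]_n) :
  ~~ (u <= A)%MS -> \rank (A + u)%MS = (\rank A).+1.
Proof.
move=> nsub_uA; have u_neq0 : u != 0 by apply: contraNneq nsub_uA => ->; rewrite sub0mx.
have := mxrank_sum_cap A u; rewrite rank_rV u_neq0 addn1.
suff -> : \rank (A :&: u)%MS = 0%N by rewrite addn0.
apply/eqP; rewrite -leqn0 -ltnS.
have := mxrank_leqif_sup (capmxSr A u); rewrite rank_rV u_neq0 => /ltn_leqif ->.
by apply: contra nsub_uA => /submx_trans; apply; rewrite capmxSl.
Qed.

Lemma krylov_dim_exists : exists2 d, (d <= n)%N & krylov_dim d.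
Proof.
have free0 : exists k, row_free (krylov_mx k).
  by exists 0%N; rewrite /row_free -leqn0 rank_leq_row.
have free_le_n k : row_free (krylov_mx k) -> (k <= n)%N.
  by rewrite /row_free => /eqP <-; exact: rank_leq_col.
have [d free_d max_d] := ex_maxnP free0 free_le_n.
exists d; first exact: free_le_n.
apply/andP; split => //; apply/negPn/negP => nsub.
have /max_d : row_free (krylov_mx d.+1).
  by rewrite /row_free (krylov_mxS d) mxrank_adds_nsub // (eqP free_d).
by rewrite ltnn.
Qed.

Lemma krylov_dim0 : krylov_dim 0 = (v == 0).
Proof.
rewrite /krylov_dim /row_free -leqn0 rank_leq_row expr0 mulmx1 flatmx0.
by apply/idP/eqP => [/submx0null|->] //; exact: sub0mx.
Qed.

Lemma sum_krylov_dim : (\sum_(d < n) krylov_dim d.+1)%N = (v != 0).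
Proof.
have [d le_dn dimd] := krylov_dim_exists.
have uniq_dim d' : krylov_dim d' = (d' == d).
  by apply/idP/eqP => [/krylov_dim_uniq/(_ dimd) //|->].
under eq_bigr do rewrite uniq_dim.
rewrite -krylov_dim0 uniq_dim; case: d => [|d] in le_dn dimd uniq_dim *.
  by rewrite big1.
rewrite (bigD1 (Ordinal le_dn)) //= eqxx big1 // => i.
by rewrite -val_eqE /= eqSS => /negPf ->.
Qed.

End Krylov.

Lemma char_poly_conj (R : comUnitRingType) n (P A : 'M[R]_n) : P \in unitmx ->
  char_poly (invmx P *m A *m P) = char_poly A.
Proof.
move=> unitP; pose C (B : 'M[R]_n) := map_mx (@polyC R) B.
have CVC : C (invmx P) *m C P = 1%:M by rewrite -map_mxM mulVmx // map_mx1.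
have conjC : char_poly_mx (invmx P *m A *m P) = C (invmx P) *m char_poly_mx A *m C P.
  rewrite /char_poly_mx mulmxBr mulmxBl !map_mxM; congr (_ - _).
  by rewrite scalar_mxC -mulmxA CVC mulmx1.
rewrite /char_poly conjC !det_mulmx mulrC mulrA -det_mulmx -map_mxM mulmxV //.
by rewrite map_mx1 det1 mul1r.
Qed.

Lemma char_poly_lblock (R : comNzRingType) n1 n2 (A : 'M[R]_n1) (X : 'M[R]_(n2, n1))
    (B : 'M[R]_n2) :
  char_poly (block_mx A 0 X B) = char_poly A * char_poly B.
Proof.
rewrite /char_poly /char_poly_mx map_block_mx scalar_mx_block opp_block_mx.
by rewrite add_block_mx map_mx0 oppr0 addr0 det_lblock.
Qed.

Lemma char_poly_coef0_neq0 (F : fieldType) n (M : 'M[F]_n) :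
  ((char_poly M)`_0 != 0) = (M \in unitmx).
Proof. by rewrite char_poly_det mulf_eq0 signr_eq0 unitmxE unitfE. Qed.

Section RowCompanion.
Variables (R : comNzRingType) (d' : nat).
Local Notation d := d'.+1.
Implicit Types a : 'rV[R]_d.

(* [companionmx (row_cpoly a)], parametrized by its last row [a]. *)
Definition row_companion a : 'M[R]_d :=
  \matrix_(i, j) if i == ord_max then a 0 j else (i.+1 == j :> nat)%:R.

Definition row_cpoly a : {poly R} := 'X^d - \poly_(i < d) a 0 (inord i).

Lemma coef_row_cpoly a k :
  (row_cpoly a)`_k = (k == d)%:R - (if (k < d)%N then a 0 (inord k) else 0).
Proof. by rewrite /row_cpoly coefB coefXn coef_poly. Qed.

Lemma size_row_cpoly a : size (row_cpoly a) = d.+1.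
Proof.
by rewrite /row_cpoly size_polyDl ?size_polyXn // size_polyN ltnS size_poly.
Qed.

Lemma row_cpoly_monic a : row_cpoly a \is monic.
Proof.
rewrite /row_cpoly monicE lead_coefDl ?lead_coefXn //.
by rewrite size_polyN size_polyXn ltnS size_poly.
Qed.

Lemma row_cpoly_coef0 a : (row_cpoly a)`_0 = - a 0 0.
Proof.
by rewrite coef_row_cpoly sub0r; congr (- a 0 _); apply: val_inj; rewrite /= inordK.
Qed.

Lemma row_cpoly_inj : injective row_cpoly.
Proof.
move=> a1 a2 eq_a12; apply/rowP => i; have := congr1 (fun p : {poly R} => p`_i) eq_a12.
by rewrite /= !coef_row_cpoly ltn_ord inord_val => /subrI.
Qed.

Lemma char_poly_row_companion a : char_poly (row_companion a) = row_cpoly a.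
Proof.
have sz : (size (row_cpoly a)).-1 = d by rewrite size_row_cpoly.
rewrite -[RHS](companionmxK (row_cpoly_monic a)).
have -> : row_companion a = castmx (sz, sz) (companionmx (row_cpoly a)).
  apply/matrixP => i j; rewrite castmxE !mxE /= sz -val_eqE /=; case: ifP => // _.
  by rewrite coef_row_cpoly ltn_eqF // ltn_ord sub0r opprK inord_val.
by case: _ / sz.
Qed.

Lemma row_companion_mul_lt m a (K : 'M[R]_(d, m)) (i : 'I_d) : (i < d')%N ->
  row i (row_companion a) *m K = row (inord i.+1) K.
Proof.
move=> lt_id; rewrite (rowE (inord i.+1)); congr (_ *m _); apply/rowP => j.
by rewrite !mxE -val_eqE /= (ltn_eqF lt_id) -val_eqE /= inordK // eq_sym.
Qed.

Lemma row_companion_mul_max m a (K : 'M[R]_(d, m)) :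
  row ord_max (row_companion a) *m K = a *m K.
Proof. by congr (_ *m _); apply/rowP => j; rewrite !mxE eqxx. Qed.

End RowCompanion.

Section KrylovCompanion.
Variables (F : fieldType) (d' n : nat).
Local Notation d := d'.+1.
Implicit Types (M : 'M[F]_n) (v : 'rV[F]_n) (K : 'M[F]_(d, n)) (a : 'rV[F]_d).

Lemma krylov_dim_companion M v : krylov_dim M v d ->
  krylov_mx M v d *m M =
  row_companion (v *m M ^+ d *m pinvmx (krylov_mx M v d)) *m krylov_mx M v d.
Proof.
case/andP=> _ sub_d; apply/row_matrixP => i.
rewrite row_mul row_krylov_mx -mulmxA mulmxE -exprSr row_mul.
have [lt_id'|le_d'i] := ltnP i d'; first by rewrite row_companion_mul_lt // rowK inordK.
have -> : i = ord_max by apply: val_inj; apply/eqP; rewrite eqn_leq le_d'i -ltnS ltn_ord.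
by rewrite row_companion_mul_max mulmxKpV.
Qed.

Lemma companion_krylov_mx M K a : K *m M = row_companion a *m K ->
  krylov_mx M (row 0 K) d = K /\ row 0 K *m M ^+ d = a *m K.
Proof.
move=> KM; have iterK i : (i < d)%N -> row 0 K *m M ^+ i = row (inord i) K.
  elim: i => [|i IHi] lt_id.
    by rewrite expr0 mulmx1; congr row; apply: val_inj; rewrite /= inordK.
  rewrite exprSr -mulmxE mulmxA IHi 1?ltnW // -row_mul KM row_mul.
  by rewrite row_companion_mul_lt ?inordK // ltnW.
split; first by apply/row_matrixP => i; rewrite rowK iterK // inord_val.
rewrite exprSr -mulmxE mulmxA iterK // -row_mul KM row_mul.
rewrite (_ : inord d' = ord_max) ?row_companion_mul_max //.
by apply: val_inj; rewrite /= inordK.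
Qed.

End KrylovCompanion.

Section BasisCompletion.
Variables (F : fieldType) (d m : nat).
Local Notation n := (d + m)%N.
Implicit Types K : 'M[F]_(d, n).

(* [row_base K^C] has exactly [m] rows when [K] is row free; otherwise
   [conform_mx] returns the junk value 0. *)
Definition complete_basis K : 'M[F]_n := col_mx K (conform_mx 0 (row_base K^C))%MS.

Lemma complete_basis_unit K : row_free K -> complete_basis K \in unitmx.
Proof.
move=> freeK; have rkC : \rank K^C%MS = m by rewrite mxrank_compl (eqP freeK) addKn.
rewrite /complete_basis -(conform_castmx (rkC, erefl)) conform_mx_id -row_full_unit.
suff eqKC : (col_mx K (castmx (rkC, erefl) (row_base K^C)) :=: K + K^C)%MS.
  by rewrite /row_full eqKC; exact: addsmx_compl_full.
apply: eqmx_trans (eqmx_sym (addsmxE _ _)) _; apply: adds_eqmx => //.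
exact: eqmx_trans (eqmx_cast _ _) (eq_row_base _).
Qed.

Lemma complete_basisEu K : row_mx 1%:M 0 *m complete_basis K = K.
Proof. by rewrite mul_row_col mul1mx mul0mx addr0. Qed.

Lemma mul_invmx_complete_basis K : row_free K ->
  K *m invmx (complete_basis K) = row_mx 1%:M 0.
Proof.
move=> freeK; rewrite -(mulmxK (complete_basis_unit freeK) (row_mx 1%:M 0)).
by rewrite complete_basisEu.
Qed.

Lemma col_mx_unit_row_free K (Y : 'M[F]_(m, n)) : col_mx K Y \in unitmx -> row_free K.
Proof.
rewrite -row_free_unit => freeKY; apply/inj_row_free => w wK0.
have /eqP : row_mx w 0 *m col_mx K Y = 0 by rewrite mul_row_col wK0 mul0mx addr0.
by rewrite mulmx_free_eq0 // => /eqP/(congr1 lsubmx); rewrite row_mxKl linear0.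
Qed.

Lemma col_mx_complete_basis_unit K (X : 'M[F]_(m, d)) (B : 'M[F]_m) : row_free K ->
  (col_mx K (row_mx X B *m complete_basis K) \in unitmx) = (B \in unitmx).
Proof.
move=> freeK; rewrite -[X in col_mx X _]complete_basisEu -mul_col_mx -block_mxEv.
by rewrite unitmx_mul complete_basis_unit // andbT !unitmxE det_lblock det1 mul1r.
Qed.

End BasisCompletion.

Section KrylovSplit.
Variables (F : fieldType) (d' m : nat).
Local Notation d := d'.+1.
Local Notation n := (d + m)%N.
Local Notation coords := (('M[F]_(d, n) * 'M[F]_(m, d)) * ('rV[F]_d * 'M[F]_m))%type.

(* The coordinates of [(M, v)] are its Krylov basis [K] and the blocks [X],
   [row_companion a], [B] of the block lower triangular matrix of [M] in the
   basis [complete_basis K]. *)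
Definition krylov_split (p : 'M[F]_n * 'rV[F]_n) : coords :=
  let: (M, v) := p in
  let K := krylov_mx M v d in
  let N := complete_basis K *m M *m invmx (complete_basis K) in
  ((K, dlsubmx N), (v *m M ^+ d *m pinvmx K, drsubmx N)).

Definition krylov_join (t : coords) : 'M[F]_n * 'rV[F]_n :=
  let: ((K, X), (a, B)) := t in
  (invmx (complete_basis K) *m block_mx (row_companion a) 0 X B *m complete_basis K,
   row 0 K).

Lemma krylov_join_companion t : row_free t.1.1 ->
  t.1.1 *m (krylov_join t).1 = row_companion t.2.1 *m t.1.1.
Proof.
case: t => [[K X] [a B]] /= freeK; rewrite !mulmxA mul_invmx_complete_basis //.
by rewrite mul_row_block !mul0mx !addr0 mul1mx mul_row_col mul1mx mul0mx addr0.
Qed.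

Lemma krylov_mx_join t : row_free t.1.1 ->
  krylov_mx (krylov_join t).1 (krylov_join t).2 d = t.1.1 /\
  (krylov_join t).2 *m (krylov_join t).1 ^+ d = t.2.1 *m t.1.1.
Proof.
move=> freeK; have := krylov_join_companion freeK.
by case: t freeK => [[K X] [a B]] _; exact: companion_krylov_mx.
Qed.

Lemma krylov_dim_join t : row_free t.1.1 ->
  krylov_dim (krylov_join t).1 (krylov_join t).2 d.
Proof.
move=> freeK; rewrite /krylov_dim; have [-> ->] := krylov_mx_join freeK.
by rewrite freeK submxMl.
Qed.

Lemma char_poly_join t : row_free t.1.1 ->
  char_poly (krylov_join t).1 = row_cpoly t.2.1 * char_poly t.2.2.
Proof.
case: t => [[K X] [a B]] /= freeK; rewrite char_poly_conj ?complete_basis_unit //.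
by rewrite char_poly_lblock char_poly_row_companion.
Qed.

Lemma krylov_joinK t : row_free t.1.1 -> krylov_split (krylov_join t) = t.
Proof.
move=> freeK; have [krylovK iterK] := krylov_mx_join freeK.
case: t => [[K X] [a B]] /= in freeK krylovK iterK *.
rewrite krylovK iterK mulmxKp // !mulmxA mulmxV ?complete_basis_unit // mul1mx.
by rewrite mulmxK ?complete_basis_unit // block_mxKdl block_mxKdr.
Qed.

Lemma krylov_splitK M v : krylov_dim M v d -> krylov_join (krylov_split (M, v)) = (M, v).
Proof.
move=> dimd; have freeK : row_free (krylov_mx M v d) by case/andP: dimd.
set K := krylov_mx M v d; set N := complete_basis K *m M *m invmx (complete_basis K).
have uN : usubmx N = row_mx (row_companion (v *m M ^+ d *m pinvmx K)) 0.
  rewrite /N -!mul_usub_mx col_mxKu krylov_dim_companion // -/K -[_ *m K *m _]mulmxA.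
  by rewrite mul_invmx_complete_basis // mul_mx_row mulmx1 mulmx0.
have blockN : block_mx (row_companion (v *m M ^+ d *m pinvmx K)) 0 (dlsubmx N) (drsubmx N)
              = N by rewrite -[RHS]submxK /ulsubmx /ursubmx uN row_mxKl row_mxKr.
rewrite /= blockN /N !mulmxA mulVmx ?complete_basis_unit // mul1mx.
by rewrite mulmxKV ?complete_basis_unit // rowK expr0 mulmx1.
Qed.

End KrylovSplit.

Section IsetMulMonic.
Variables (F : fieldType) (f q : {poly F}) (m : nat).
Hypotheses (q_monic : q \is monic) (size_q : size q = m.+1).

Lemma size_modp_monic : (size (f %% q)%R <= m)%N.
Proof. by rewrite -ltnS -size_q ltn_modpN0 ?monic_neq0. Qed.

Lemma size_sub_mulr_monic p k : (m <= k)%N ->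
  (size (f - p * q)%R <= k)%N = (size (f %/ q - p)%R <= k - m)%N.
Proof.
move=> le_mk; have -> : f - p * q = (f %/ q - p) * q + f %% q.
  by rewrite {1}(divp_eq f q); ring.
have [->|nz] := eqVneq (f %/ q - p) 0.
  by rewrite mul0r add0r size_poly0 leq0n (leq_trans size_modp_monic).
have size_mul : size ((f %/ q - p) * q) = (size (f %/ q - p)%R + m)%N.
  by rewrite size_Mmonic // size_q addnS.
have lt_mod : (size (f %% q)%R < size ((f %/ q - p) * q)%R)%N.
  by rewrite size_mul; have := size_modp_monic; rewrite -size_poly_gt0 in nz; lia.
rewrite size_polyDl // size_mul; lia.
Qed.

Lemma Iset_mulr_monic p h : (m <= h)%N -> Iset f h (p * q) = Iset (f %/ q) (h - m) p.
Proof.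
move=> le_mh; rewrite /Iset monicMr // size_sub_mulr_monic; last exact: leqW.
by rewrite subSn.
Qed.

Lemma Iset_mulr_monic_inj p1 p2 h : (h < m)%N ->
  Iset f h (p1 * q) -> Iset f h (p2 * q) -> p1 = p2.
Proof.
move=> lt_hm /andP[_ size1] /andP[_ size2]; apply/eqP; rewrite -subr_eq0.
have : (size ((p1 - p2) * q)%R <= h.+1)%N.
  have -> : (p1 - p2) * q = (f - p2 * q) - (f - p1 * q) by ring.
  by rewrite (leq_trans (size_polyD _ _)) // size_polyN geq_max size1 size2.
apply: contraTT => nz; rewrite -ltnNge size_Mmonic // size_q addnS /=.
by rewrite addnC -[h.+2]addn1 leq_add // size_poly_gt0.
Qed.

End IsetMulMonic.

Lemma divp_monic (F : fieldType) (f q : {poly F}) :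
  f \is monic -> q \is monic -> (size q <= size f)%N -> f %/ q \is monic.
Proof.
move=> f_monic q_monic le_qf; have q_neq0 := monic_neq0 q_monic.
have [k size_q] : exists k, size q = k.+1.
  by exists (size q).-1; rewrite prednK // size_poly_gt0.
have size_div := size_divp f q_neq0; rewrite size_q /= in size_div le_qf.
have div_neq0 : f %/ q != 0 by rewrite -size_poly_gt0 size_div subn_gt0.
have lt_mod : (size (f %% q)%R < size (f %/ q * q)%R)%N.
  rewrite size_Mmonic // size_div size_q addnS subnK ?(ltnW le_qf) //.
  by rewrite (leq_trans _ le_qf) // -size_q ltn_modpN0.
apply/monicP; rewrite -(lead_coef_Mmonic _ q_monic) -(lead_coefDl lt_mod) -divp_eq.
exact/monicP.
Qed.

Section RowCpolyIset.
Variables (F : fieldType) (d' : nat) (s : {poly F}).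
Local Notation d := d'.+1.
Hypotheses (s_monic : s \is monic) (size_s : size s = d.+1).

Lemma Iset_row_cpoly k (a : 'rV[F]_d) :
  Iset s k (row_cpoly a) = [forall i : 'I_d, (k < i)%N ==> (a 0 i == - s`_i)].
Proof.
rewrite /Iset row_cpoly_monic /=; apply/leq_sizeP/forallP => [coef0 i|fixed j lt_kj].
  apply/implyP => lt_ki; have /eqP := coef0 i lt_ki.
  rewrite coefB coef_row_cpoly ltn_ord (ltn_eqF (ltn_ord i)) inord_val mulr0n sub0r opprK.
  by rewrite addrC addr_eq0.
rewrite coefB coef_row_cpoly; have [lt_jd|lt_dj|->] := ltngtP j d.
- have /eqP := implyP (fixed (Ordinal lt_jd)) lt_kj.
  rewrite mulr0n sub0r opprK (_ : inord j = Ordinal lt_jd) => [->|].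
    by rewrite addrN.
  by apply: val_inj; rewrite /= inordK.
- by rewrite nth_default ?size_s // mulr0n !subr0.
- by move: (monicP s_monic); rewrite lead_coefE size_s => ->; rewrite subr0 subrr.
Qed.

End RowCpolyIset.

Lemma card_set_sum (T : finType) (P : pred T) : #|[set x | P x]| = (\sum_x P x)%N.
Proof. by rewrite -sum1_card big_mkcond; apply: eq_bigr => x _; rewrite inE. Qed.

Lemma card_set_pair (T1 T2 : finType) (R : pred (T1 * T2)) :
  #|[set x | R x]| = (\sum_(y : T2) #|[set x | R (x, y)]|)%N.
Proof.
rewrite card_set_sum; under [in RHS]eq_bigr => y _ do rewrite card_set_sum.
by rewrite exchange_big pair_big /=; apply: eq_bigr => -[].
Qed.

Lemma prod_nat_if_lt d k q : (k <= d)%N ->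
  (\prod_(i < d) (if (i < k)%N then q else 1))%N = (q ^ k)%N.
Proof.
move=> le_kd; rewrite -big_mkcond /= (big_ord_narrow le_kd).
by rewrite prod_nat_const card_ord.
Qed.

Lemma card_rows_fixed_tail (T : finType) d (t0 : T) (c : 'I_d.+1 -> T) k :
  (k <= d)%N ->
  #|[set a : 'rV[T]_d.+1 |
      (a 0 0 != t0) && [forall i : 'I_d.+1, (k < i)%N ==> (a 0 i == c i)]]|
  = ((#|T| - 1) * #|T| ^ k)%N.
Proof.
move=> le_kd; set A := [set a | _].
pose S (i : 'I_d.+1) : {set T} :=
  if i == ord0 then [set~ t0] else if (k < i)%N then [set c i] else setT.
pose row_of (g : {ffun 'I_d.+1 -> T}) := \row_i g i.
pose ffun_of (a : 'rV[T]_d.+1) := [ffun i => a 0 i].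
have row_ofK : cancel row_of ffun_of by move=> g; apply/ffunP => i; rewrite ffunE mxE.
have ffun_ofK : cancel ffun_of row_of by move=> a; apply/rowP => i; rewrite mxE ffunE.
rewrite -(card_imset _ (can_inj ffun_ofK)) (can2_imset_pre _ ffun_ofK row_ofK).
have -> : row_of @^-1: A = setXn S.
  apply/setP => g; rewrite in_setXn !inE !mxE; apply/andP/forallP => [[g0 /forallP gk] i|gS].
    rewrite /S; case: eqP => [->|_]; first by rewrite !inE.
    by have := gk i; rewrite mxE; case: ifP => _; rewrite !inE // => /eqP.
  split; first by have := gS ord0; rewrite /S eqxx !inE.
  apply/forallP => i; rewrite mxE; apply/implyP => lt_ki; have := gS i.
  by rewrite /S lt_ki ifN ?inE //; apply: contraTneq lt_ki => ->.
rewrite cardsXn big_ord_recl /S eqxx cardsC1 subn1; congr (_ * _)%N.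
rewrite -(prod_nat_if_lt #|T| le_kd); apply: eq_bigr => i _.
by rewrite eq_sym (negbTE (neq_lift _ _)) lift0 ltnS; case: leqP; rewrite ?cards1 ?cardsT.
Qed.

(* [p`_0 != 0] is what singles out the characteristic polynomials of invertible
   matrices. *)
Definition Iset_unit (F : fieldType) (f : {poly F}) (h : nat) : pred {poly F} :=
  fun p => (p`_0 != 0) && Iset f h p.

Lemma Iset_unit_mulr_coef0 (F : fieldType) (f p q : {poly F}) h :
  q`_0 = 0 -> Iset_unit f h (p * q) = false.
Proof. by move=> q0; rewrite /Iset_unit coef0M q0 mulr0 eqxx. Qed.

Section CountCompanionFactor.
Variables (F : finFieldType) (d' m : nat) (f q : {poly F}).
Local Notation d := d'.+1.
Hypotheses (q_monic : q \is monic) (size_q : size q = m.+1).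

Lemma card_Iset_unit_mulr_low h : (h < m)%N ->
  (#|[set a : 'rV[F]_d | Iset_unit f h (row_cpoly a * q)%R]| <= 1)%N.
Proof.
move=> lt_hm; apply/card_le1_eqP => a1 a2; rewrite !inE => /andP[_ I1] /andP[_ I2].
by apply: row_cpoly_inj; exact: (Iset_mulr_monic_inj q_monic size_q lt_hm I2 I1).
Qed.

Hypotheses (f_monic : f \is monic) (size_f : size f = (d + m).+1).

Lemma card_Iset_unit_mulr_high h : q`_0 != 0 -> (m <= h)%N -> (h.+1 < d + m)%N ->
  #|[set a : 'rV[F]_d | Iset_unit f h (row_cpoly a * q)]|
  = ((#|F| - 1) * #|F| ^ (h - m))%N.
Proof.
move=> q0_neq0 le_mh lt_hn.
have size_div : size (f %/ q) = d.+1.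
  by rewrite size_divp ?monic_neq0 // size_f size_q; lia.
have div_monic : f %/ q \is monic by rewrite divp_monic // size_f size_q; lia.
rewrite -(@card_rows_fixed_tail _ d' 0 (fun i => - (f %/ q)`_i)); last by lia.
congr #|pred_of_set _|; apply/setP => a.
rewrite !inE /Iset_unit (Iset_mulr_monic _ q_monic size_q _ le_mh) Iset_row_cpoly //.
by rewrite coef0M mulf_eq0 (negPf q0_neq0) orbF row_cpoly_coef0 oppr_eq0.
Qed.

End CountCompanionFactor.

Section CountByKrylovDim.
Variables (F : finFieldType) (d' m : nat).
Local Notation d := d'.+1.
Local Notation n := (d + m)%N.
Local Notation frames := (#|[set K : 'M[F]_(d, n) | row_free K]| * #|{: 'M[F]_(m, d)}|)%N.

Lemma card_unitmx_split :
  #|[set P : 'M[F]_n | P \in unitmx]| = (frames * #|[set B : 'M[F]_m | B \in unitmx]|)%N.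
Proof.
pose glue (t : 'M[F]_(d, n) * ('M[F]_(m, d) * 'M[F]_m)) :=
  col_mx t.1 (row_mx t.2.1 t.2.2 *m complete_basis t.1).
pose A := setX [set K : 'M[F]_(d, n) | row_free K]
               (setX [set: 'M[F]_(m, d)] [set B : 'M[F]_m | B \in unitmx]).
have glue_inj : {in A &, injective glue}.
  move=> [K [X B]] [K' [X' B']] /setXP[/[!inE] freeK _] _.
  rewrite /glue /= => /eq_col_mx[<-]; move/(congr1 (mulmx^~ (invmx (complete_basis K)))).
  by rewrite !mulmxK ?complete_basis_unit // => /eq_row_mx[-> ->].
rewrite -mulnA -cardsT -!cardsX -(card_in_imset glue_inj); congr #|pred_of_set _|.
apply/setP => P; rewrite inE; apply/idP/imsetP => [unitP|[[K [X B]] tA ->]]; last first.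
  by move: tA; rewrite !inE /= => /andP[freeK unitB]; rewrite col_mx_complete_basis_unit.
have freeK : row_free (usubmx P).
  by apply: (@col_mx_unit_row_free _ _ _ _ (dsubmx P)); rewrite vsubmxK.
pose XB := dsubmx P *m invmx (complete_basis (usubmx P)).
have gluePK :
    col_mx (usubmx P) (row_mx (lsubmx XB) (rsubmx XB) *m complete_basis (usubmx P)) = P.
  by rewrite hsubmxK mulmxKV ?complete_basis_unit // vsubmxK.
exists (usubmx P, (lsubmx XB, rsubmx XB)); last by rewrite /glue /= gluePK.
by rewrite !inE freeK -(col_mx_complete_basis_unit (lsubmx XB) _ freeK) /= gluePK.
Qed.

Lemma card_krylov_dim (Q : pred {poly F}) :
  #|[set p : 'M[F]_n * 'rV[F]_n | krylov_dim p.1 p.2 d && Q (char_poly p.1)]| =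
  (frames * #|[set aB : 'rV[F]_d * 'M[F]_m | Q (row_cpoly aB.1 * char_poly aB.2)%R]|)%N.
Proof.
pose A := setX (setX [set K : 'M[F]_(d, n) | row_free K] [set: 'M[F]_(m, d)])
               [set aB : 'rV[F]_d * 'M[F]_m | Q (row_cpoly aB.1 * char_poly aB.2)].
have freeA t : t \in A -> row_free t.1.1 by rewrite !inE => /andP[/andP[]].
have join_inj : {in A &, injective (@krylov_join F d' m)}.
  move=> t t' /freeA freeK /freeA freeK' eq_tt'.
  by rewrite -(krylov_joinK freeK) -(krylov_joinK freeK') eq_tt'.
rewrite -cardsT -!cardsX -(card_in_imset join_inj); congr #|pred_of_set _|.
apply/setP => p; rewrite inE; apply/idP/imsetP => [|[t tA ->]].
  case: p => M v /andP[/= dimd QM]; have [freeK _] := andP dimd.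
  exists (krylov_split (M, v)); last by rewrite krylov_splitK.
  by rewrite !inE freeK -(char_poly_join (t := krylov_split (M, v))) ?krylov_splitK.
have freeK := freeA t tA; move: tA; rewrite !inE => /andP[_ Qt].
by rewrite krylov_dim_join // char_poly_join.
Qed.

End CountByKrylovDim.

Section CountCharPolyInIset.
Variables (F : finFieldType) (h : nat) (f : {poly F}).
Hypothesis f_monic : f \is monic.
Local Notation GL_card n := #|[set M : 'M[F]_n | M \in unitmx]|.

Lemma card_krylov_dim_Iset_high n i : size f = n.+1 -> (i < n)%N ->
  (n <= i + h.+1)%N -> (h.+1 < n)%N ->
  #|[set p : 'M[F]_n * 'rV[F]_n |
      krylov_dim p.1 p.2 i.+1 && Iset_unit f h (char_poly p.1)]|
  = (GL_card n * ((#|F| - 1) * #|F| ^ (i + h.+1 - n)))%N.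
Proof.
move=> + lt_in; have [m ->] : exists m, n = (i.+1 + m)%N by exists (n - i.+1)%N; lia.
move=> size_f le_mh lt_hn; rewrite card_krylov_dim card_unitmx_split -[RHS]mulnA.
congr (_ * _)%N; rewrite card_set_pair /= (_ : (i + h.+1 - (i.+1 + m) = h - m)%N); last by lia.
transitivity (\sum_(B : 'M[F]_m) (B \in unitmx) * ((#|F| - 1) * #|F| ^ (h - m)))%N.
  apply: eq_bigr => B _; rewrite -char_poly_coef0_neq0; case: eqP => [B0|/eqP B0].
    by apply/eqP; rewrite cards_eq0; apply/eqP/setP => a; rewrite !inE Iset_unit_mulr_coef0.
  by rewrite mul1n (@card_Iset_unit_mulr_high _ i m) ?char_poly_monic ?size_char_poly //; lia.
by rewrite -big_distrl -card_set_sum.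
Qed.

Lemma card_krylov_dim_Iset_low n i : (i < n)%N -> (i + h.+1 < n)%N ->
  (#|[set p : 'M[F]_n * 'rV[F]_n |
       krylov_dim p.1 p.2 i.+1 && Iset_unit f h (char_poly p.1)]| <= GL_card n)%N.
Proof.
move=> lt_in; have [m ->] : exists m, n = (i.+1 + m)%N by exists (n - i.+1)%N; lia.
move=> lt_hm; rewrite card_krylov_dim card_unitmx_split leq_mul2l.
rewrite card_set_pair /= [X in (_ <= X)%N]card_set_sum; apply/orP; right.
apply: leq_sum => B _; rewrite -char_poly_coef0_neq0; case: eqP => [B0|_].
  by rewrite leqn0 cards_eq0; apply/eqP/setP => a; rewrite !inE Iset_unit_mulr_coef0.
by rewrite (@card_Iset_unit_mulr_low _ i m) ?char_poly_monic ?size_char_poly //; lia.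
Qed.

Lemma card_pairs_Iset_unit n :
  #|[set p : 'M[F]_n * 'rV[F]_n | (p.2 != 0) && Iset_unit f h (char_poly p.1)]| =
  (#|[set M : 'M[F]_n | (M \in unitmx) && Iset f h (char_poly M)]| * (#|F| ^ n - 1))%N.
Proof.
have -> : (#|F| ^ n - 1)%N = #|[set v : 'rV[F]_n | v != 0]|.
  by rewrite cardsE cardC1 card_mx mul1n subn1.
rewrite -cardsX; congr #|pred_of_set _|.
by apply/setP => -[M v]; rewrite !inE /Iset_unit char_poly_coef0_neq0 andbC.
Qed.

End CountCharPolyInIset.

Lemma card_pairs_by_krylov_dim (F : finFieldType) n (Q : pred {poly F}) :
  #|[set p : 'M[F]_n * 'rV[F]_n | (p.2 != 0) && Q (char_poly p.1)]| =
  (\sum_(i < n)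
     #|[set p : 'M[F]_n * 'rV[F]_n | krylov_dim p.1 p.2 i.+1 && Q (char_poly p.1)]|)%N.
Proof.
under [RHS]eq_bigr do rewrite card_set_sum.
rewrite card_set_sum exchange_big; apply: eq_bigr => -[M v] _ /=.
case: (Q _); last by rewrite andbF big1 // => i; rewrite andbF.
by under eq_bigr do rewrite andbT; rewrite andbT sum_krylov_dim.
Qed.

Lemma card_charpoly_Iset_decomp (F : finFieldType) n h (f : {poly F}) :
  f \is monic -> size f = n.+1 -> (h.+1 < n)%N ->
  let GL_card := #|[set M : 'M[F]_n | M \in unitmx]| in
  exists2 E,
    (#|[set M : 'M[F]_n | (M \in unitmx) && Iset f h (char_poly M)]| * (#|F| ^ n - 1)
       = E + GL_card * (#|F| ^ h.+1 - 1))%N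
    & (E <= (n - h.+1) * GL_card)%N.
Proof.
move=> f_monic size_f lt_hn GL_card.
pose c i := #|[set p : 'M[F]_n * 'rV[F]_n |
               krylov_dim p.1 p.2 i.+1 && Iset_unit f h (char_poly p.1)]|.
rewrite -card_pairs_Iset_unit card_pairs_by_krylov_dim -(big_mkord xpredT c).
rewrite (big_cat_nat (leq0n (n - h.+1)) (leq_subr _ _)) /=.
exists (\sum_(0 <= i < n - h.+1) c i)%N.
  congr (_ + _)%N; rewrite -[in LHS](add0n (n - h.+1)%N) big_addn.
  rewrite (_ : n - (n - h.+1) = h.+1)%N; last by lia.
  transitivity (\sum_(j < h.+1) GL_card * ((#|F| - 1) * #|F| ^ j))%N.
    rewrite big_mkord; apply: eq_bigr => j _; have lt_jh := ltn_ord j.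
    rewrite /c card_krylov_dim_Iset_high //; try lia.
    by rewrite (_ : j + (n - h.+1) + h.+1 - n = j)%N //; lia.
  by rewrite -big_distrr -big_distrr /= !subn1 predn_exp.
have -> : ((n - h.+1) * GL_card = \sum_(0 <= i < n - h.+1) GL_card)%N.
  by rewrite sum_nat_const_nat subn0.
rewrite big_nat_cond [X in (_ <= X)%N]big_nat_cond.
by apply: leq_sum => i /andP[/andP[_ lt_i] _]; apply: card_krylov_dim_Iset_low; lia.
Qed.

Lemma ratio_dist_le (R : realFieldType) (N G Q P E k : R) :
  0 < G -> 0 < Q -> 0 <= N <= G -> 0 <= E <= k * G ->
  N * (Q - 1) = E + G * (P - 1) -> `|N / G - P / Q| <= (k + 1) / Q.
Proof.
move=> G_gt0 Q_gt0 /andP[N_ge0 le_NG] /andP[E_ge0 le_EkG] count.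
have -> : N / G - P / Q = (E + N - G) / (G * Q).
  have -> : E = N * (Q - 1) - G * (P - 1) by rewrite count; ring.
  by field; rewrite gt_eqF ?lt0r_neq0.
rewrite normf_div (gtr0_norm (mulr_gt0 G_gt0 Q_gt0)) ler_pdivrMr ?mulr_gt0 //.
rewrite (_ : (k + 1) / Q * (G * Q) = (k + 1) * G); last by field; rewrite gt_eqF.
by rewrite ler_norml; apply/andP; split; nra.
Qed.

Unset Implicit Arguments.

Theorem theorem1p8 (F : finFieldType) (n h : nat) (f : {poly F}) :
  (1 <= n)%N -> (h.+1 < n)%N ->
  f \is monic -> size f = n.+1 ->
  `| prob_charpoly_in_I n f h - (#|F| ^ h.+1)%:R / (#|F| ^ n)%:R | <=
    (n - h)%:R / (#|F| ^ n)%:R :> rat.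
Proof.
move=> _ lt_hn f_monic size_f.
have [E count le_E] := card_charpoly_Iset_decomp f_monic size_f lt_hn.
have q_gt1 : (1 < #|F|)%N by apply: card_finNzRing_gt1.
rewrite /prob_charpoly_in_I (_ : (n - h = (n - h.+1) + 1)%N) ?natrD; last by lia.
apply: (@ratio_dist_le _ _ _ _ _ E%:R); rewrite ?ler0n ?ltr0n ?expn_gt0 ?(ltnW q_gt1) //.
- by apply/card_gt0P; exists 1%:M; rewrite inE unitmx1.
- by rewrite ler_nat subset_leq_card //; apply/subsetP => M; rewrite !inE => /andP[].
- by rewrite -natrM ler_nat.
- move/(congr1 (fun x => x%:R : rat)): count.
  by rewrite natrD !natrM !natrB ?expn_gt0 ?(ltnW q_gt1).
Qed.
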